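(* Let $p:[0,\infty)\to\mathbb{R}$ be concave, increasing and continuous, and suppose its right derivative at $0$, $p'(0+)$, exists and satisfies $p'(0+)>0$. Then the function $F:\mathbb{R}^n\to\mathbb{R}$, $$F(x)=p'(0+)\|x\|_1-\sum_{i=1}^n p(|x_i|),$$ is convex on $\mathbb{R}^n$. *)

From HB Require Import structures.
From mathcomp Require Import all_boot all_order all_algebra.
From mathcomp Require Import all_classical all_reals all_analysis.
Set Implicit Arguments. Unset Strict Implicit. Unset Printing Implicit Defensive.
Import Order.TTheory GRing.Theory Num.Theory.
Import numFieldNormedType.Exports.
Local Open Scope classical_set_scope.
Local Open Scope ring_scope.

Definition concave_on_nonneg (R : realType) (p : R -> R) : Prop :=
  forall (x y t : R), 0 <= x -> 0 <= y -> 0 <= t -> t <= 1 ->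
    (1 - t) * p x + t * p y <= p ((1 - t) * x + t * y).

Definition increasing_on_nonneg (R : realType) (p : R -> R) : Prop :=
  forall x y : R, 0 <= x -> x <= y -> p x <= p y.

Definition right_deriv_at0 (R : realType) (p : R -> R) (d : R) : Prop :=
  (fun h : R => (p h - p 0) / h) x @[x --> (0:R)^'+] --> d.

Definition convex_on_Rn (R : realType) (n : nat) (F : 'rV[R]_n -> R) : Prop :=
  forall (x y : 'rV[R]_n) (t : R), 0 <= t -> t <= 1 ->
    F ((1 - t) *: x + t *: y) <= (1 - t) * F x + t * F y.

Definition Fpen (R : realType) (n : nat) (p : R -> R) (d : R) (x : 'rV[R]_n) : R :=
  d * (\sum_(i < n) `|x ord0 i|) - \sum_(i < n) p `|x ord0 i|.

From HB Require Import structures.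
From mathcomp Require Import all_boot all_order all_algebra.
From mathcomp Require Import all_classical all_reals all_analysis.
From mathcomp Require Import ring lra.
Import Order.TTheory GRing.Theory Num.Theory.
Import numFieldNormedType.Exports.
Local Open Scope classical_set_scope.
Local Open Scope ring_scope.

(* F x = sum_i g |x_i| with g u := d u - p u.  For concave p, the chord
   slopes of p on [0, +oo) are bounded by the slope from 0, which increases
   to its limit p'(0+) = d as the chord shrinks; hence g is nondecreasing on
   [0, +oo), and it is convex there as a linear function minus a concave one.
   A nondecreasing convex g on [0, +oo) makes u |-> g |u| convex on R, and a
   sum of convex functions of the coordinates is convex. *)

Section ConcaveSlopes.
Context {R : realType} {p : R -> R}.
Hypothesis p_concave : concave_on_nonneg p.

Let slope0 (y : R) := (p y - p 0) / y.

Lemma concave_slope0_antitone {h y : R} :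
  0 < h -> h <= y -> slope0 y <= slope0 h.
Proof.
move=> h_gt0 hy; have y_gt0 := lt_le_trans h_gt0 hy.
have t_ge0 : 0 <= h / y by rewrite divr_ge0 ?ltW.
have t_le1 : h / y <= 1 by rewrite ler_pdivrMr // mul1r.
have := p_concave 0 y _ (lexx 0) (ltW y_gt0) t_ge0 t_le1.
have -> : (1 - h / y) * 0 + h / y * y = h by field; rewrite gt_eqF.
rewrite /slope0 ler_pdivlMr // => hconc.
have -> : (p y - p 0) / y * h = (1 - h / y) * p 0 + h / y * p y - p 0.
  by field; rewrite gt_eqF.
lra.
Qed.

Lemma concave_slope0_le_right_deriv {d y : R} :
  right_deriv_at0 p d -> 0 < y -> slope0 y <= d.
Proof.
move=> pd y_gt0; rewrite -(cvg_lim _ pd) //.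
apply: limr_ge; first by apply/cvg_ex; exists d.
near=> h; apply: concave_slope0_antitone.
  by near: h; exact: nbhs_right_gt.
by apply: ltW; near: h; exact: nbhs_right_lt.
Unshelve. all: by end_near.
Qed.

Lemma concave_increment_le_slope0 {x y : R} :
  0 <= x -> x <= y -> 0 < y -> p y - p x <= (y - x) * slope0 y.
Proof.
move=> x_ge0 xy y_gt0.
have t_ge0 : 0 <= x / y by rewrite divr_ge0 // ltW.
have t_le1 : x / y <= 1 by rewrite ler_pdivrMr // mul1r.
have := p_concave 0 y _ (lexx 0) (ltW y_gt0) t_ge0 t_le1.
have -> : (1 - x / y) * 0 + x / y * y = x by field; rewrite gt_eqF.
have -> : (y - x) * slope0 y = (1 - x / y) * (p y - p 0).
  by rewrite /slope0; field; rewrite gt_eqF.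
lra.
Qed.

Lemma concave_increment_le_right_deriv {d x y : R} :
  right_deriv_at0 p d -> 0 <= x -> x <= y -> p y - p x <= d * (y - x).
Proof.
move=> pd x_ge0 xy; have [y_le0|y_gt0] := lerP y 0.
  have -> : x = y by apply/eqP; rewrite eq_le xy (le_trans y_le0 x_ge0).
  by rewrite !subrr mulr0.
apply: (le_trans (concave_increment_le_slope0 x_ge0 xy y_gt0)).
rewrite mulrC ler_wpM2r ?subr_ge0 //.
exact: concave_slope0_le_right_deriv.
Qed.

End ConcaveSlopes.

Definition convex_on_nonneg {R : realType} (g : R -> R) : Prop :=
  forall (x y t : R), 0 <= x -> 0 <= y -> 0 <= t -> t <= 1 ->
    g ((1 - t) * x + t * y) <= (1 - t) * g x + t * g y.

Definition convex_on_R {R : realType} (g : R -> R) : Prop :=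
  forall (x y t : R), 0 <= t -> t <= 1 ->
    g ((1 - t) * x + t * y) <= (1 - t) * g x + t * g y.

Lemma convex_on_R_comp_norm {R : realType} (g : R -> R) :
  increasing_on_nonneg g -> convex_on_nonneg g -> convex_on_R (fun u => g `|u|).
Proof.
move=> g_incr g_conv x y t t_ge0 t_le1 /=.
have t'_ge0 : 0 <= 1 - t by rewrite subr_ge0.
apply: (le_trans _ (g_conv _ _ _ (normr_ge0 x) (normr_ge0 y) t_ge0 t_le1)).
apply: g_incr; first exact: normr_ge0.
apply: (le_trans (ler_normD _ _)).
by rewrite !normrM (ger0_norm t_ge0) (ger0_norm t'_ge0).
Qed.

Lemma convex_on_Rn_sum_coord {R : realType} {n : nat} (g : R -> R) :
  convex_on_R g -> convex_on_Rn (fun x : 'rV[R]_n => \sum_(i < n) g (x ord0 i)).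
Proof.
move=> g_conv x y t t_ge0 t_le1.
rewrite !mulr_sumr -big_split /=; apply: ler_sum => i _.
by rewrite !mxE; exact: g_conv.
Qed.

Definition penalty {R : realType} (p : R -> R) (d u : R) : R := d * u - p u.

Lemma Fpen_sum_penalty {R : realType} (n : nat) (p : R -> R) (d : R) :
  Fpen p d = fun x : 'rV[R]_n => \sum_(i < n) penalty p d `|x ord0 i|.
Proof. by apply/funext => x; rewrite /Fpen mulr_sumr -sumrB. Qed.

Section Penalty.
Context {R : realType} {p : R -> R} {d : R}.
Hypotheses (p_concave : concave_on_nonneg p) (pd : right_deriv_at0 p d).

Lemma penalty_increasing : increasing_on_nonneg (penalty p d).
Proof.
move=> x y x_ge0 xy.
have := concave_increment_le_right_deriv p_concave pd x_ge0 xy.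
rewrite /penalty; lra.
Qed.

Lemma penalty_convex : convex_on_nonneg (penalty p d).
Proof.
move=> x y t x_ge0 y_ge0 t_ge0 t_le1.
have := p_concave x y t x_ge0 y_ge0 t_ge0 t_le1.
rewrite /penalty; nra.
Qed.

End Penalty.

Theorem proposition3p1 (R : realType) (n : nat) (p : R -> R) (d : R) :
  concave_on_nonneg p ->
  increasing_on_nonneg p ->
  {within `[0, +oo[, continuous p} ->
  right_deriv_at0 p d ->
  0 < d ->
  convex_on_Rn (@Fpen R n p d).
Proof.
move=> p_concave _ _ pd _.
rewrite Fpen_sum_penalty.
apply: (convex_on_Rn_sum_coord (fun u => penalty p d `|u|)).
apply: convex_on_R_comp_norm.
  exact: penalty_increasing.
exact: penalty_convex.
Qed.
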